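(* Let $n\ge 3$ and let $D_n=\langle \rho,\tau \mid \rho^n=\tau^2=1,\ \tau\rho\tau=\rho^{-1}\rangle$ be the dihedral group of order $2n$. Let $0<i<j<n$ and $X=\mathrm{Cay}(D_n;\{\tau,\rho^i\tau,\rho^j\tau\})$. Then $X$ is connected if and only if $\gcd(n,i,j)=1$. Moreover, if $\gcd(n,i,j)=1$ and $m=\gcd(n,i)$, then $X$ is isomorphic to the honeycomb toroidal graph $\mathrm{HTG}(m,2n/m,\ell)$ for some integer $\ell$.
   Context: For a finite group $G$ and $S\subset G$ with $1\notin S$ and $S=S^{-1}$, the Cayley graph $\mathrm{Cay}(G;S)$ has vertex set $G$, with $g$ adjacent to $h$ iff $h=gs$ for some $s\in S$. Honeycomb toroidal graph: let $m\ge 1$ be an integer, $n'\ge 4$ an even integer, and $\ell$ an integer with $\ell\equiv m \pmod 2$. The graph $\mathrm{HTG}(m,n',\ell)$ has vertex set $\{u_{a,b}: 0\le a\le m-1,\ b\in\mathbb{Z}_{n'}\}$ and edges: vertical edges $u_{a,b}u_{a,b+1}$ for all $a,b$; flat edges $u_{a,b}u_{a+1,b}$ for $0\le a\le m-2$ and all $b$ with $a+b$ odd; jump edges $u_{m-1,b}u_{0,b+\ell}$ for all $b$ with $b\equiv m\pmod 2$ (second subscripts modulo $n'$). *)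

From mathcomp Require Import all_boot all_algebra all_fingroup.
Set Implicit Arguments. Unset Strict Implicit. Unset Printing Implicit Defensive.

Definition cay_adj (gT : finGroupType) (S : {set gT}) : rel gT :=
  fun g h => (g^-1 * h)%g \in S.

Definition connected_graph (T : finType) (e : rel T) : Prop :=
  forall x y : T, connect e x y.

Definition graph_iso (T1 T2 : finType) (e1 : rel T1) (e2 : rel T2) : Prop :=
  exists f : T1 -> T2, bijective f /\ forall x y, e2 (f x) (f y) = e1 x y.

(* Honeycomb toroidal graph HTG(m, n', l): vertex u_{a,b} is the pair (a, b)
   with a : 'I_m and b : 'I_n' (b read in Z_n').  Directed "edge generators": *)
Definition htg_edge (m n' : nat) (l : int) (x y : 'I_m * 'I_n') : bool :=
  let: (a1, b1) := x in let: (a2, b2) := y in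
  [&& (a1 : nat) == a2 & (b2 : nat) == (b1.+1 %% n')%N]
  || [&& (a2 : nat) == a1.+1, (b1 : nat) == b2 & odd (a1 + b1)]
  || [&& (a1 : nat) == m.-1, (a2 : nat) == 0%N, odd b1 == odd m
       & ((b2 : nat)%:Z == ((b1 : nat)%:Z + l) %% (n' : nat)%:Z)%Z].

Definition htg_adj (m n' : nat) (l : int) : rel ('I_m * 'I_n') :=
  fun x y => htg_edge l x y || htg_edge l y x.

From mathcomp Require Import all_boot all_algebra all_fingroup all_solvable.
From mathcomp Require Import zify.
Set Implicit Arguments. Unset Strict Implicit. Unset Printing Implicit Defensive.

(* If d = gcd(n, i, j) then S lies in the subgroup <rho^d><tau>, which
   contains rho only when d = 1; conversely rho^i = (rho^i tau) tau and
   rho^j lie in <<S>>, hence so does rho^gcd(n, i, j) (refl_genP).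

   Let m = gcd(n, i), N = n/m, and choose c >= m with
   c i = m j (mod n).  The vertex u_{a,b} of HTG(m, 2N, 2c - m) is mapped to
   rho^(a j + h i) tau^[a + b even], where h = hheight m a b grows by one
   every second step up a column.  Orienting the Cayley graph (a rotation
   has out-edges rho^i tau and rho^j tau, a reflection the out-edge tau),
   vertical steps of HTG become the tau / rho^i tau edges and flat/jump steps
   the rho^j tau edges; the shift 2c - m makes the last column close up onto
   the first.  Injectivity is pure arithmetic modulo n (using gcd(m, j) = 1
   and gcd(N, i/m) = 1), and both graphs have 2n vertices. *)

Lemma eq_mod_close N x y : x = y %[mod N] -> x < y + N -> y < x + N -> x = y.
Proof.
wlog le_xy : x y / x <= y => [W eq_xy lt_x lt_y|].
  case: (leqP x y) => [le_xy | /ltnW le_yx]; first exact: W.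
  exact/esym/(W y x le_yx (esym eq_xy) lt_y lt_x).
move=> /esym/eqP; rewrite eqn_mod_dvd // => /dvdnP[k hk] _ lt_yx.
have : k * N < N by rewrite -hk; lia.
by case: k hk => [|k] hk; [lia | rewrite mulSn; lia].
Qed.

Lemma mod_cancel_coprime d k x y : coprime d k ->
  x * k = y * k %[mod d] -> x = y %[mod d].
Proof.
move=> co; wlog le_xy : x y / x <= y => [W|].
  by case: (leqP x y) => [/W|/ltnW/W] // h /esym/h.
move=> /eqP; rewrite eq_sym eqn_mod_dvd ?leq_mul2r ?le_xy ?orbT // -mulnBl.
by rewrite Gauss_dvdl // -eqn_mod_dvd // eq_sym => /eqP.
Qed.

(* Since gcd(n, i) is an integral combination of n and i, some c >= gcd(n, i)
   satisfies c * i = gcd(n, i) * j modulo n, for every j. *)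
Lemma gcd_multiple_shift n i j : 0 < n ->
  exists2 c, gcdn n i <= c & c * i = gcdn n i * j %[mod n].
Proof.
move=> n_gt0; have [a lt_an /dvdnP[k hk]] := Bezoutl i n_gt0.
exists ((n - a) * j + gcdn n i * n); first exact: leq_trans (leq_pmulr _ n_gt0) (leq_addl _ _).
have ai_le : a * i <= n * i by rewrite leq_mul2r ltnW ?orbT.
have shift : (n - a) * i = gcdn n i %[mod n].
  rewrite -(modnMDl k) -hk.
  have -> : gcdn n i + a * i + (n - a) * i = i * n + gcdn n i by rewrite mulnBl; lia.
  by rewrite modnMDl.
have -> : ((n - a) * j + gcdn n i * n) * i = gcdn n i * i * n + (n - a) * i * j.
  by rewrite mulnDl addnC -!mulnA (mulnC n i) (mulnC j i).
by rewrite modnMDl -modnMml shift modnMml.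
Qed.

Lemma double_sub_parity m c : m <= c -> ((2 : int) %| (Posz (c.*2 - m) - Posz m)%R)%Z.
Proof.
move=> le_mc; have -> : (c.*2 - m = (c - m).*2 + m)%N by lia.
by rewrite PoszD GRing.addrK dvdzE /= dvdn2 odd_double.
Qed.

(* The height of the vertex u_{a,b} (0 <= a <= m) of a honeycomb graph:
   it increases by one along every other vertical edge of a column and is
   constant along flat edges. *)
Definition hheight (m a b : nat) : nat := (b + m.*2 - a) %/ 2.

Lemma hheightS m a b : a <= m -> hheight m a b.+1 = hheight m a b + odd (a + b).
Proof. rewrite /hheight; lia. Qed.

Lemma hheight_flat m a b : a < m -> odd (a + b) -> hheight m a.+1 b = hheight m a b.
Proof. rewrite /hheight; lia. Qed.

Lemma hheight_period m a b N : a <= m -> hheight m a (b + N.*2) = hheight m a b + N.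
Proof. rewrite /hheight; lia. Qed.

Lemma hheight_wrap m b c :
  m <= c -> hheight m 0 (b + (c.*2 - m)) = hheight m m b + c.
Proof. rewrite /hheight; lia. Qed.

Lemma hheight_inj_mod m N a b b' : a <= m -> b < N.*2 -> b' < N.*2 ->
  odd (a + b) = odd (a + b') -> hheight m a b = hheight m a b' %[mod N] -> b = b'.
Proof.
move=> le_am lt_b lt_b' par /eq_mod_close eq_h.
have : hheight m a b = hheight m a b' by apply: eq_h; rewrite /hheight; lia.
rewrite /hheight; lia.
Qed.

Lemma honeycomb_exponent_inj n i m j a a' b b' :
  0 < m -> gcdn n i = m -> coprime m j -> a < m -> a' < m ->
  b < (n %/ m).*2 -> b' < (n %/ m).*2 -> odd (a + b) = odd (a' + b') ->
  a * j + hheight m a b * i = a' * j + hheight m a' b' * i %[mod n] ->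
  a = a' /\ b = b'.
Proof.
move=> m_gt0 def_m co_mj lt_am lt_a'm lt_b lt_b' par cong.
have [/dvdnP[N def_n] /dvdnP[I def_i]] : m %| n /\ m %| i.
  by rewrite -def_m dvdn_gcdl dvdn_gcdr.
subst n i; rewrite mulnK // in lt_b lt_b'.
have co_NI : coprime N I.
  by rewrite /coprime -(eqn_pmul2r m_gt0) mul1n muln_gcdl def_m.
have eq_a : a = a'.
  apply/eqP; rewrite -(modn_small lt_am) -(modn_small lt_a'm).
  apply/eqP/(mod_cancel_coprime co_mj).
  move: cong => /(congr1 (modn^~ m)); rewrite !modn_dvdm ?dvdn_mull //.
  by rewrite !mulnA ![_ + _ * m]addnC !modnMDl.
subst a'; split=> //; apply: (hheight_inj_mod (ltnW lt_am) lt_b lt_b' par).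
move: cong => /eqP; rewrite eqn_modDl => /eqP cong.
apply: (mod_cancel_coprime co_NI); apply/eqP.
by rewrite -(eqn_pmul2r m_gt0) !muln_modl // -!mulnA; apply/eqP.
Qed.

Section HoneycombMoves.
Variables (m n' l : nat).
Hypotheses (m_gt0 : 0 < m) (n'_gt0 : 0 < n').

Definition htg_up (x : 'I_m * 'I_n') : 'I_m * 'I_n' :=
  (x.1, Ordinal (ltn_pmod x.2.+1 n'_gt0)).

Definition htg_jump (x : 'I_m * 'I_n') : 'I_m * 'I_n' :=
  (Ordinal (ltn_pmod x.1.+1 m_gt0),
   if x.1.+1 < m then x.2 else Ordinal (ltn_pmod (x.2 + l) n'_gt0)).

Lemma htg_edgeE x y :
  htg_edge (Posz l) x y = (y == htg_up x) || odd (x.1 + x.2) && (y == htg_jump x).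
Proof.
case: x y => [a1 b1] [a2 b2]; rewrite /htg_edge /htg_up /htg_jump /=.
rewrite !xpair_eqE; case: ltnP => [lt_a1m | le_ma1]; rewrite -!val_eqE /=.
  have -> : (a1 == m.-1 :> nat) = false by apply/negbTE; lia.
  rewrite (modn_small lt_a1m) (eq_sym (a1 : nat)) (eq_sym (b1 : nat)).
  by case: (odd _); rewrite /= ?andbT ?andbF ?orbF.
have def_m : a1.+1 = m by have := ltn_ord a1; lia.
have -> : (a2 == a1.+1 :> nat) = false by apply/negbTE; have := ltn_ord a2; lia.
have -> : (a1 == m.-1 :> nat) by apply/eqP; lia.
have -> : a1.+1 %% m = 0 by rewrite def_m modnn.
have -> : odd m = ~~ odd a1 by lia.
rewrite -PoszD modz_nat eqz_nat (eq_sym (a1 : nat)) oddD.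
by case: (odd a1); case: (odd b1); rewrite /= ?andbF ?orbF.
Qed.

End HoneycombMoves.

Import GroupScope.

Section CayleyConnectivity.
Variables (gT : finGroupType) (S : {set gT}).

Lemma cay_connect_transl z x y :
  connect (cay_adj S) x y -> connect (cay_adj S) (z * x) (z * y).
Proof.
move=> /connectP[p pth ->]; apply/connectP; exists (map (fun w => z * w) p); last first.
  by rewrite last_map.
elim: p x pth => //= a p IH x /andP[xa pth]; rewrite IH // andbT.
by rewrite /cay_adj invMg -mulgA mulKg.
Qed.

Lemma cay_connect1E w : connect (cay_adj S) 1 w = (w \in <<S>>).
Proof.
have reach_group : group_set [set u | connect (cay_adj S) 1 u].
  apply/group_setP; split=> [|u v]; first by rewrite inE connect0.
  rewrite !inE => c1u c1v; apply: connect_trans c1u _.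
  by rewrite -[u in connect _ u _]mulg1; apply: cay_connect_transl.
have path_gen x p : x \in <<S>> -> path (cay_adj S) x p -> last x p \in <<S>>.
  elim: p x => //= a p IH x genx /andP[xa pth]; apply: IH pth.
  by rewrite -(mulKVg x a) groupM //; apply: mem_gen.
apply/idP/idP => [/connectP[p pth ->] | w_gen]; first exact: path_gen pth.
have : w \in Group reach_group.
  apply: subsetP w_gen; rewrite gen_subG; apply/subsetP => s Ss.
  by rewrite inE connect1 // /cay_adj invg1 mul1g.
by rewrite inE.
Qed.

Lemma cay_connectE x y : connect (cay_adj S) x y = (x^-1 * y \in <<S>>).
Proof.
rewrite -cay_connect1E; apply/idP/idP => [/(cay_connect_transl x^-1)|].
  by rewrite mulVg.
by move/(cay_connect_transl x); rewrite mulg1 mulKVg.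
Qed.

Lemma cay_connectedP : connected_graph (cay_adj S) <-> <<S>> = [set: gT].
Proof.
split=> [conn | genS x y]; last by rewrite cay_connectE genS inE.
by apply/setP => w; rewrite -cay_connect1E inE conn.
Qed.

End CayleyConnectivity.

Lemma expg_gcd_mem (gT : finGroupType) (G : {group gT}) (r : gT) x y :
  0 < x -> r ^+ x \in G -> r ^+ y \in G -> r ^+ gcdn x y \in G.
Proof.
move=> x_gt0 Gx Gy; have [a _ /dvdnP[k bezout]] := Bezoutl y x_gt0.
have -> : r ^+ gcdn x y = r ^+ (k * x) * (r ^+ (a * y))^-1.
  by rewrite -bezout expgD mulgK.
by rewrite groupM ?groupV // mulnC expgM groupX.
Qed.

Section Dihedral.
Variables (n : nat) (gT : finGroupType) (rho tau : gT).
Hypotheses (n_gt0 : 0 < n) (gen_rho_tau : <<[set rho; tau]>> = [set: gT]).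
Hypotheses (rho_n : rho ^+ n = 1) (tau2 : tau ^+ 2 = 1).
Hypotheses (tau_rho_tau : tau * rho * tau = rho^-1) (card_gT : #|gT| = n.*2).

Lemma tauV : tau^-1 = tau.
Proof. by apply/eqP; rewrite eq_invg_mul -tau2. Qed.

Lemma rotJ e : (rho ^+ e) ^ tau = rho ^- e.
Proof. by rewrite conjXg /conjg tauV mulgA tau_rho_tau expgVn. Qed.

Lemma mem_cycle_tau t : t \in <[tau]> -> t = 1 \/ t = tau.
Proof.
case/cycleP=> k ->; rewrite -(expg_mod k tau2) modn2.
by case: (odd k); [right; rewrite expg1 | left; rewrite expg0].
Qed.

Lemma cycle_tau_norm e : <[tau]> \subset 'N(<[rho ^+ e]>).
Proof. by rewrite cycle_subG inE -cycleJ rotJ cycleV. Qed.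

Lemma rot_mul_cycle_tau : [set: gT] = <[rho]> * <[tau]>.
Proof.
rewrite -[rho]expg1 -norm_joinEr ?cycle_tau_norm // expg1.
apply/eqP; rewrite eqEsubset subsetT -gen_rho_tau genS //.
by apply/subsetP => x /set2P[] ->; rewrite inE ?cycle_id ?orbT.
Qed.

(* Counting: 2n = |<rho><tau>| <= #[rho] * 2 and #[rho] divides n. *)
Lemma order_rho : #[rho] = n.
Proof.
have le_n : #[rho] <= n by apply: dvdn_leq n_gt0 _; rewrite order_dvdn rho_n.
have le_tau : #[tau] <= 2 by apply: dvdn_leq => //; rewrite order_dvdn tau2.
have : (#|[set: gT]| * 1 <= #[rho] * #[tau])%N.
  by rewrite rot_mul_cycle_tau [(#[rho] * _)%N]mul_cardG leq_mul2l cardG_gt0 orbT.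
rewrite cardsT card_gT; nia.
Qed.

(* tau is not a rotation, since the rotations form a proper subgroup. *)
Lemma tau_notin_rot : tau \notin <[rho]>.
Proof.
apply/negP => rot_tau; have : [set: gT] \subset <[rho]>.
  rewrite -gen_rho_tau gen_subG; apply/subsetP => x /set2P[] -> //.
  exact: cycle_id.
by move/subset_leq_card; rewrite cardsT card_gT -orderE order_rho; lia.
Qed.

Lemma mul_tau_rot u : (u * tau \in <[rho]>) = (u \notin <[rho]>).
Proof.
have := in_setT u; rewrite rot_mul_cycle_tau => /mulsgP[r t rot_r /mem_cycle_tau[]->->].
  by rewrite mulg1 rot_r groupMl // (negbTE tau_notin_rot).
rewrite -mulgA -{2}tauV mulgV mulg1 rot_r groupMl //.
by rewrite tau_notin_rot.
Qed.

Lemma mul_refl_rot u e : (u * (rho ^+ e * tau) \in <[rho]>) = (u \notin <[rho]>).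
Proof. by rewrite mulgA mul_tau_rot groupMr // mem_cycle. Qed.

Lemma reflV e : (rho ^+ e * tau)^-1 = rho ^+ e * tau.
Proof. by rewrite invMg tauV -rotJ conjgE tauV !mulgA -{2}tauV mulgV mul1g. Qed.

Lemma expg_rho_mod x y : x = y %[mod n] -> rho ^+ x = rho ^+ y.
Proof. by move=> eq_xy; apply/eqP; rewrite eq_expg_mod_order order_rho eq_xy. Qed.

Section Reflections.
Variables i j : nat.

Definition refl_set : {set gT} := [set tau; rho ^+ i * tau; rho ^+ j * tau].

Lemma refl_gen_sub d : (d %| i)%N -> (d %| j)%N ->
  <<refl_set>> \subset <[rho ^+ d]> * <[tau]>.
Proof.
move=> d_i d_j; rewrite -norm_joinEr ?cycle_tau_norm // gen_subG /=.
rewrite norm_joinEr ?cycle_tau_norm //.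
have refl_mem e : (d %| e)%N -> rho ^+ e * tau \in <[rho ^+ d]> * <[tau]>.
  by case/dvdnP=> q ->; rewrite mulnC expgM mem_mulg ?mem_cycle ?cycle_id.
apply/subsetP => s; rewrite !inE -orbA => /or3P[] /eqP-> {s}; rewrite ?refl_mem //.
by rewrite -[X in X \in _]mul1g -(expg0 rho) refl_mem ?dvdn0.
Qed.

Lemma rho_mem_sub d : (d %| n)%N -> rho \in <[rho ^+ d]> * <[tau]> -> d = 1%N.
Proof.
move=> d_n /mulsgP[u t rot_u /mem_cycle_tau[] -> def_rho]; last first.
  case/negP: tau_notin_rot.
  have rot_u' : u \in <[rho]> by apply: subsetP rot_u; rewrite cycle_subG mem_cycle.
  by rewrite -(mulKg u tau) -def_rho groupM ?groupV ?cycle_id.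
have rho_D : rho \in <[rho ^+ d]> by rewrite {1}def_rho mulg1.
have : #[rho] <= #[rho ^+ d] by rewrite !orderE subset_leq_card ?cycle_subG.
rewrite orderXdiv order_rho // => le_n.
have d_gt0 : 0 < d by apply: dvdn_gt0 n_gt0 d_n.
apply/eqP; rewrite eqn_leq d_gt0 andbT leqNgt; apply/negP => d_gt1.
by have := ltn_Pdiv d_gt1 n_gt0; rewrite ltnNge le_n.
Qed.

Lemma rho_mem_refl_gen : gcdn (gcdn n i) j = 1%N -> rho \in <<refl_set>>.
Proof.
move=> gcd1; have rot_gen e : rho ^+ e * tau \in refl_set -> rho ^+ e \in <<refl_set>>.
  move=> Se; rewrite -(mulgK tau (rho ^+ e)) tauV groupM ?mem_gen //.
  by rewrite !inE eqxx.
have gen_i : rho ^+ i \in <<refl_set>> by rewrite rot_gen // !inE eqxx orbT.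
have gen_j : rho ^+ j \in <<refl_set>> by rewrite rot_gen // !inE eqxx !orbT.
have gen_ni : rho ^+ gcdn n i \in <<refl_set>> by rewrite expg_gcd_mem // rho_n group1.
by rewrite -(expg1 rho) -gcd1 expg_gcd_mem // gcdn_gt0 n_gt0.
Qed.

Lemma refl_genP : <<refl_set>> = [set: gT] <-> gcdn (gcdn n i) j = 1%N.
Proof.
split=> [gen_all | gcd1].
  set d := gcdn (gcdn n i) j.
  have d_n : (d %| n)%N by rewrite (dvdn_trans (dvdn_gcdl _ _)) ?dvdn_gcdl.
  have d_i : (d %| i)%N by rewrite (dvdn_trans (dvdn_gcdl _ _)) ?dvdn_gcdr.
  apply: rho_mem_sub d_n _; move/subsetP: (refl_gen_sub d_i (dvdn_gcdr _ _)).
  by apply; rewrite gen_all inE.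
apply/eqP; rewrite eqEsubset subsetT -gen_rho_tau gen_subG.
apply/subsetP => x /set2P[] ->; first exact: rho_mem_refl_gen.
by rewrite mem_gen // !inE eqxx.
Qed.

(* Orientation of Cay(D_n; refl_set): a rotation u has the out-edges labelled
   rho^i tau and rho^j tau, a reflection u has the single out-edge labelled
   tau. *)
Definition refl_step (u : gT) : gT := if u \in <[rho]> then rho ^+ i * tau else tau.

Definition cay_out (u v : gT) : bool :=
  (v == u * refl_step u) || (u \in <[rho]>) && (v == u * (rho ^+ j * tau)).

Lemma refl_step_mem u : refl_step u \in refl_set.
Proof. by rewrite /refl_step; case: ifP; rewrite !inE eqxx ?orbT. Qed.

Lemma refl_stepV u : (refl_step u)^-1 = refl_step u.
Proof. by rewrite /refl_step; case: ifP; rewrite ?reflV ?tauV. Qed.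

Lemma cay_adj_oriented u v : cay_adj refl_set u v = cay_out u v || cay_out v u.
Proof.
have [s ->] : exists s, v = u * s by exists (u^-1 * v); rewrite mulKVg.
have back t : t^-1 = t -> (u == u * s * t) = (s == t).
  move=> tV; rewrite -{1}(mulg1 u) -mulgA (inj_eq (mulgI u)) eq_sym -eq_invg_mul.
  by rewrite -[t in _ == t]tV (inj_eq invg_inj).
rewrite /cay_adj /cay_out mulKg !(inj_eq (mulgI u)) !back ?refl_stepV ?reflV //.
apply/idP/idP => [|/orP[/orP[|/andP[_]]|/orP[|/andP[_]]] /eqP->].
- rewrite !inE -orbA => /or3P[] /eqP->.
  + by rewrite /refl_step mul_tau_rot; case: (u \in _); rewrite /= eqxx ?orbT.
  + by rewrite /refl_step mul_refl_rot; case: (u \in _); rewrite /= eqxx ?orbT.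
  + by rewrite /refl_step mul_refl_rot; case: (u \in _); rewrite /= eqxx ?orbT.
- exact: refl_step_mem.
- by rewrite !inE eqxx !orbT.
- exact: refl_step_mem.
- by rewrite !inE eqxx !orbT.
Qed.

Section Honeycomb.
Variable c : nat.
Let m := gcdn n i.
Let N := n %/ m.
Let n' := n.*2 %/ m.
Let l := c.*2 - m.
Hypotheses (coprime_mj : coprime m j) (le_mc : m <= c).
Hypothesis c_shift : c * i = m * j %[mod n].

Lemma m_gt0 : 0 < m. Proof. by rewrite gcdn_gt0 n_gt0. Qed.

Lemma n'E : n' = N.*2.
Proof. by rewrite /n' /N -!muln2 divn_mulAC ?dvdn_gcdl. Qed.

Lemma n'_gt0 : 0 < n'.
Proof. by rewrite n'E double_gt0 divn_gt0 ?m_gt0 // dvdn_leq ?dvdn_gcdl. Qed.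

Lemma rho_Ni : rho ^+ (N * i) = 1.
Proof.
by rewrite /N divn_mulAC ?dvdn_gcdl // -muln_divA ?dvdn_gcdr // expgM rho_n expg1n.
Qed.

(* The vertex u_{a,b} of HTG(m, 2N, l) is sent to
   rho^(a j + h i) tau^[a + b even], h = hheight m a b: moving up a column
   multiplies by tau and rho^i tau alternately, a flat edge by rho^j tau. *)
Definition coord (a b : nat) : gT :=
  rho ^+ (a * j + hheight m a b * i) * (if odd (a + b) then 1 else tau).

Lemma coord_rot a b : (coord a b \in <[rho]>) = odd (a + b).
Proof. by rewrite /coord; case: odd; rewrite ?mulg1 ?mem_cycle // mul_tau_rot mem_cycle. Qed.

Lemma coord_up a b : a <= m -> coord a b.+1 = coord a b * refl_step (coord a b).
Proof.
move=> le_am; rewrite /refl_step coord_rot /coord hheightS // addnS /=.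
case: (odd (a + b)) => /=.
  by rewrite addn1 mulg1 mulgA -expgD mulSnr addnA.
by rewrite addn0 mulg1 -mulgA -{2}tauV mulgV mulg1.
Qed.

Lemma coord_jump a b : a < m -> odd (a + b) -> coord a.+1 b = coord a b * (rho ^+ j * tau).
Proof.
move=> lt_am odd_ab; rewrite /coord hheight_flat // addSn /= odd_ab /=.
by rewrite mulg1 mulgA -expgD mulSnr addnAC.
Qed.

Lemma coord_period a b : a <= m -> coord a (b + n') = coord a b.
Proof.
move=> le_am; rewrite /coord n'E hheight_period // addnA oddD odd_double addbF.
by rewrite mulnDl addnA expgD rho_Ni mulg1.
Qed.

Lemma coord_mod a b : a <= m -> coord a (b %% n') = coord a b.
Proof.
move=> le_am; rewrite {2}(divn_eq b n'); elim: (b %/ n') => [|k IH].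
  by rewrite mul0n add0n.
by rewrite mulSnr addnAC coord_period.
Qed.

Lemma coord_wrap b : coord m b = coord 0 (b + l).
Proof.
rewrite /coord /l hheight_wrap // add0n mul0n add0n.
have -> : odd (b + (c.*2 - m)) = odd (m + b).
  by move: le_mc; clear; lia.
congr (_ * _); apply: expg_rho_mod.
by rewrite mulnDl addnC -modnDmr -c_shift modnDmr.
Qed.

Definition coordv (x : 'I_m * 'I_n') : gT := coord x.1 x.2.

Lemma coordv_up (x : 'I_m * 'I_n') : coordv (htg_up n'_gt0 x) = coordv x * refl_step (coordv x).
Proof. by case: x => a b; rewrite /coordv /= coord_mod ?coord_up // ltnW. Qed.

Lemma coordv_jump (x : 'I_m * 'I_n') :
  odd (x.1 + x.2) -> coordv (htg_jump l m_gt0 n'_gt0 x) = coordv x * (rho ^+ j * tau).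
Proof.
case: x => a b /= odd_ab; rewrite /coordv /htg_jump /= -coord_jump //.
case: ltnP => [lt_a1m | le_ma1]; first by rewrite modn_small.
have def_m : a.+1 = m by have := ltn_ord a; lia.
by rewrite /= def_m modnn coord_mod // -coord_wrap.
Qed.

Lemma coordv_inj : injective coordv.
Proof.
move=> [a b] [a' b']; rewrite /coordv /= => eq_ab; have par : odd (a + b) = odd (a' + b').
  by rewrite -coord_rot eq_ab coord_rot.
move: eq_ab; rewrite /coord par => /mulIg /eqP.
rewrite eq_expg_mod_order order_rho => /eqP cong.
have [] := honeycomb_exponent_inj m_gt0 (erefl m) coprime_mj (ltn_ord a) (ltn_ord a')
  _ _ par cong; rewrite -?n'E ?ltn_ord // => eq_a eq_b.
by congr (_, _); apply: val_inj.
Qed.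

Lemma coordv_bij : bijective coordv.
Proof.
apply: (inj_card_bij coordv_inj); rewrite card_prod !card_ord n'E card_gT.
by rewrite -doubleMr mulnC divnK ?dvdn_gcdl.
Qed.

Lemma htg_edge_out x y : htg_edge (Posz l) x y = cay_out (coordv x) (coordv y).
Proof.
rewrite (htg_edgeE l m_gt0 n'_gt0) /cay_out -coordv_up (inj_eq coordv_inj).
have -> : (coordv x \in <[rho]>) = odd (x.1 + x.2) by exact: coord_rot.
case: (boolP (odd _)) => //= odd_x.
by rewrite -coordv_jump // (inj_eq coordv_inj).
Qed.

Lemma dihedral_htg_iso :
  graph_iso (cay_adj refl_set) (htg_adj (m := m) (n' := n') (Posz l)).
Proof.
have [coordv' coordvK coordv'K] := coordv_bij.
exists coordv'; split=> [|u v]; first by exists coordv.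
by rewrite -{2}(coordv'K u) -{2}(coordv'K v) cay_adj_oriented /htg_adj !htg_edge_out.
Qed.

End Honeycomb.

End Reflections.
End Dihedral.

Theorem mainTheorem8 (n : nat) (gT : finGroupType) (rho tau : gT)
  (hn : (3 <= n)%N)
  (hgen : <<[set rho; tau]>>%g = [set: gT])
  (hrho : (rho ^+ n)%g = 1%g) (htau : (tau ^+ 2)%g = 1%g)
  (hrel : (tau * rho * tau)%g = (rho^-1)%g)
  (hord : #|gT| = n.*2)
  (i j : nat) (hi : (0 < i)%N) (hij : (i < j)%N) (hjn : (j < n)%N) :
  let S := [set tau; (rho ^+ i * tau)%g; (rho ^+ j * tau)%g] in
  (connected_graph (cay_adj S) <-> gcdn (gcdn n i) j = 1%N) /\
  (gcdn (gcdn n i) j = 1%N ->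
   let m := gcdn n i in
   exists l : int, (((2 : int) %| (l - Posz m)%R)%Z) /\
     graph_iso (cay_adj S) (htg_adj (m := m) (n' := (n.*2 %/ m)%N) l)).
Proof.
move=> S; have n_gt0 : 0 < n by apply: leq_trans hn.
have refl_gen := refl_genP n_gt0 hgen hrho htau hrel hord i j.
split; first exact: iff_trans (cay_connectedP S) refl_gen.
move=> gcd1 m; have [c le_mc c_shift] := gcd_multiple_shift i j n_gt0.
have co_mj : coprime m j by rewrite /coprime gcd1.
exists (Posz (c.*2 - m)); split; first exact: double_sub_parity.
exact: (dihedral_htg_iso n_gt0 hgen hrho htau hrel hord co_mj le_mc c_shift).
Qed.
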